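(* Let $\mathcal{A}\subset\mathbb{Z}$ be a finite alphabet, let $G=(V,E)$ be a finite directed graph with edge labelling $\ell:E\to\mathcal{A}$, assume the matrix $M=\sum_{a\in\mathcal{A}}M_a$ is primitive, let $\beta>1$ be a Pisot number and let $\nu=(\phi^+)_*(\mu^+)$ as described in the context. If $x\in\mathbb{R}$ satisfies $\nu(\{x\})>0$, then the set $(\phi^+)^{-1}(\{x\})$ is open in $\mathcal{K}^+$.
   Context: For $a\in\mathcal{A}$, $M_a$ is the $V\times V$ matrix with $(M_a)_{ij}=1$ if $(i,j)\in E$ and $\ell((i,j))=a$, and $0$ otherwise. By Perron–Frobenius, $M$ has a dominant eigenvalue $\lambda>0$ with positive left eigenvector $\mathbf v_L$ and right eigenvector $\mathbf v_R$, normalised by $\mathbf v_L^{\mathsf T}\mathbf v_R=1$. $\mathcal{K}^+\subseteq\mathcal{A}^{\mathbb{N}}$ is the set of sequences $(\ell(e_k))_{k\ge1}$ for infinite paths $e_1e_2\ldots$ in $G$ (terminal vertex of $e_j$ equals initial vertex of $e_{j+1}$), with the topology generated by cylinder sets $[\varepsilon_1,\ldots,\varepsilon_k]=\{x\in\mathcal{K}^+: x_1=\varepsilon_1,\ldots,x_k=\varepsilon_k\}$. $\mu^+$ is the Borel probability measure on $\mathcal{K}^+$ with $\mu^+([\varepsilon_1,\ldots,\varepsilon_k])=\lambda^{-k}\mathbf v_L^{\mathsf T}M_{\varepsilon_1}\cdots M_{\varepsilon_k}\mathbf v_R$. A Pisot number is an algebraic integer $>1$ all of whose other Galois conjugates have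 modulus $<1$ (integers $\ge2$ included). $\phi^+:\mathcal{K}^+\to\mathbb{R}$, $(x_k)\mapsto\sum_{k\ge1}x_k\beta^{-k}$, and $\nu(A)=\mu^+((\phi^+)^{-1}(A))$. *)

From HB Require Import structures.
From mathcomp Require Import all_boot all_order all_algebra.
From mathcomp Require Import all_classical all_reals all_analysis.
From mathcomp Require Import complex.
Set Implicit Arguments. Unset Strict Implicit. Unset Printing Implicit Defensive.
Import Order.TTheory GRing.Theory Num.Theory.
Local Open Scope classical_set_scope.
Local Open Scope ring_scope.

(* Pisot number: real algebraic integer > 1 whose other Galois conjugates
   all have modulus < 1.  The minimal polynomial of an algebraic integer is
   the monic, integer-coefficient, Q-irreducible polynomial vanishing at it. *)
Definition is_pisot (R : realType) (b : R) : Prop :=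
  1 < b /\
  exists p : {poly rat},
    [/\ p \is monic, p \is a polyOver Num.int, irreducible_poly p,
        root (map_poly ratr p) b &
        forall z : R[i], root (map_poly ratr p) z -> z != (b%:C)%C -> `|z| < 1].

Section Graph.
Variables (R : realType) (V : finType) (E : rel V) (lab : V -> V -> int).

Definition Mlab (a : int) (i j : V) : R := ((E i j) && (lab i j == a))%:R.
(* M = sum_a M_a, i.e. the adjacency matrix (each edge has exactly one label) *)
Definition Madj (i j : V) : R := (E i j)%:R.

Fixpoint Mpow (k : nat) (i j : V) : R :=
  match k with
  | 0 => (i == j)%:R
  | k'.+1 => \sum_(l : V) Mpow k' i l * Madj l j
  end.

Definition primitive_mx : Prop := exists k : nat, forall i j : V, 0 < Mpow k i j.

Definition rowMlab (r : V -> R) (a : int) : V -> R :=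
  fun j => \sum_(i : V) r i * Mlab a i j.

Definition word_weight (vL vR : V -> R) (w : seq int) : R :=
  \sum_(j : V) (foldl rowMlab vL w) j * vR j.

(* K^+ : label sequences of infinite paths (x_{k+1} is stored at index k) *)
Definition Kplus : set (nat -> int) :=
  [set x | exists p : nat -> V, forall k, E (p k) (p k.+1) /\ lab (p k) (p k.+1) = x k].

End Graph.

HB.instance Definition _ := isPointed.Build int 0%R.

Definition cyl (w : seq int) : set (nat -> int) :=
  [set x | forall i, (i < size w)%N -> x i = nth 0 w i].

(* sequence space with the sigma-algebra generated by cylinders (= Borel sets
   of the product topology, int discrete) *)
Definition SeqSpace : measurableType ((range cyl).-sigma)%mdisp := g_sigma_algebraType (range cyl).

(* openness in the topology of K^+ generated by the cylinder sets *)
Definition open_in_K (K S : set (nat -> int)) : Prop :=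
  S `<=` K /\
  forall x, S x -> exists k : nat, forall y, K y -> (forall i, (i < k)%N -> y i = x i) -> S y.

Definition phi (R : realType) (beta : R) (x : nat -> int) : R :=
  limn (fun n => \sum_(k < n) (x k)%:~R * beta ^- k.+1).

(* Write K_v for the label sequences of the infinite paths starting at v.  If
   phi^+ is constant on every K_v, then two points of K^+ with a long enough
   common prefix have the same image, so every fiber is open.  Otherwise, by
   primitivity, phi^+ is constant on no K_v, so every vertex v has two paths
   with images at distance d_v > 0.  For K with beta^-K small compared to all
   the d_v, every vertex v and every target z then admit a word u of length K
   read from v whose cylinder carries a fixed proportion eta of the mass at v
   and lies, after rescaling by beta^K, too far from z for any of its
   subcylinders to meet phi^-1(z).  Peeling off K letters at a time, the mass
   of the level-jK cylinders that can meet phi^-1(x) is at most (1 - eta)^j,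
   hence nu({x}) = 0. *)

From HB Require Import structures.
From mathcomp Require Import all_boot all_order all_algebra.
From mathcomp Require Import all_classical all_reals all_analysis.
From mathcomp Require Import complex.
From mathcomp Require Import ring lra.
Import numFieldNormedType.Exports.
Set Implicit Arguments. Unset Strict Implicit. Unset Printing Implicit Defensive.
Import Order.TTheory GRing.Theory Num.Theory.
Local Open Scope classical_set_scope.
Local Open Scope ring_scope.

Lemma geometric_lt (R : realType) (q D eps : R) :
  0 <= q < 1 -> 0 < eps -> exists n, D * q ^+ n < eps.
Proof.
move=> /andP [q0 q1] e0.
have qn0 : (fun n => D * q ^+ n) @ \oo --> 0.
  by rewrite -(mulr0 D); apply: cvgMl_tmp; apply: cvg_expr; rewrite ger0_norm.
have [N _ HN] := cvgr0_norm_lt _ qn0 _ e0.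
by exists N; apply: le_lt_trans (ler_norm _) (HN N (leqnn N)).
Qed.

Section BetaExpansion.
Variables (R : realType) (beta : R).
Hypothesis beta_gt1 : 1 < beta.

Lemma beta_gt0 : 0 < beta. Proof. exact: lt_trans beta_gt1. Qed.

Lemma exprVn_gt0 n : 0 < beta ^- n.
Proof. by rewrite invr_gt0 exprn_gt0 // beta_gt0. Qed.

Lemma exprVn_le m n : (m <= n)%N -> beta ^- n <= beta ^- m.
Proof.
move=> mn; rewrite lef_pV2 ?posrE ?exprn_gt0 ?beta_gt0 //.
by rewrite ler_eXn2l.
Qed.

Lemma exprVn_lt (D eps : R) : 0 < eps -> exists n, D * beta ^- n < eps.
Proof.
move=> e0; have [|n Hn] := @geometric_lt R beta^-1 D eps _ e0.
  by rewrite invr_ge0 invf_lt1 ?beta_gt0 // (ltW beta_gt0).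
by exists n; rewrite -exprVn.
Qed.

Lemma le_exprVn_eq0 (t D : R) : (forall m, `|t| <= D * beta ^- m) -> t = 0.
Proof.
move=> H; apply/eqP; apply: contraT; rewrite -normr_gt0 => t_gt0.
have [m hm] := exprVn_lt D t_gt0.
by have := H m; rewrite leNgt hm.
Qed.

Fixpoint wval (w : seq int) : R :=
  if w is a :: w' then beta^-1 * (a%:~R + wval w') else 0.

Lemma wval_cat w1 w2 : wval (w1 ++ w2) = wval w1 + beta ^- size w1 * wval w2.
Proof.
elim: w1 => [|a w IH] /=; first by rewrite expr0 invr1 mul1r add0r.
rewrite IH exprS invfM; ring.
Qed.

Lemma wval_bound (amax : R) w : 0 <= amax ->
  (forall a, a \in w -> `|a%:~R| <= amax) -> `|wval w| <= amax / (beta - 1).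
Proof.
move=> amax_ge0; elim: w => [|a w IH] H /=.
  by rewrite normr0 divr_ge0 // subr_ge0 ltW.
have ha : `|a%:~R| <= amax by apply: H; rewrite mem_head.
have hw : `|wval w| <= amax / (beta - 1).
  by apply: IH => b hb; apply: H; rewrite in_cons hb orbT.
rewrite normrM normfV (gtr0_norm beta_gt0) ler_pdivrMl ?beta_gt0 //.
apply: (le_trans (ler_normD _ _)).
have -> : beta * (amax / (beta - 1)) = amax + amax / (beta - 1).
  by field; rewrite subr_eq0 gt_eqF.
exact: lerD.
Qed.

Lemma partial_sum_wval (y : nat -> int) n :
  \sum_(k < n) (y k)%:~R * beta ^- k.+1 = wval (mkseq y n).
Proof.
elim: n => [|n IH]; first by rewrite big_ord0.
rewrite big_ord_recr IH mkseqS -cats1 wval_cat size_mkseq /= exprSr invfM; ring.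
Qed.

Lemma mkseqD (T : Type) (y : nat -> T) n k :
  mkseq y (n + k) = mkseq y n ++ mkseq (fun i => y (n + i)%N) k.
Proof.
rewrite /mkseq iotaD map_cat add0n; congr (_ ++ _).
by rewrite -[in LHS](addn0 n) iotaDl -map_comp.
Qed.

Section BoundedDigits.
Variables (amax : R) (y : nat -> int).
Hypotheses (amax_ge0 : 0 <= amax) (y_bound : forall i, `|(y i)%:~R| <= amax).
Let C := amax / (beta - 1).

Lemma wval_prefix_dist n m : (n <= m)%N ->
  `|wval (mkseq y m) - wval (mkseq y n)| <= C * beta ^- n.
Proof.
move=> /subnKC <-; rewrite mkseqD wval_cat size_mkseq addrAC subrr add0r.
rewrite normrM normfV normrX (gtr0_norm beta_gt0) mulrC ler_wpM2r //.
  by rewrite invr_ge0 exprn_ge0 // ltW // beta_gt0.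
by apply: wval_bound => // a /mapP [i _ ->].
Qed.

Lemma wval_prefix_cvg : wval (mkseq y n) @[n --> \oo] --> phi beta y.
Proof.
have u_cvg : cvgn (fun n => wval (mkseq y n)).
  apply/cauchy_cvgP; apply: (@cauchy_exP R R) => e e0.
  have [N HN] := exprVn_lt C e0.
  exists (wval (mkseq y N)); exists N => // n /= hn.
  by rewrite -ball_normE /= distrC (le_lt_trans (wval_prefix_dist hn)).
suff -> : phi beta y = limn (fun n => wval (mkseq y n)) by [].
by rewrite /phi; congr (limn _); apply: funext => m; rewrite partial_sum_wval.
Qed.

Lemma phi_prefix_dist n : `|phi beta y - wval (mkseq y n)| <= C * beta ^- n.
Proof.
have dist_cvg : `|wval (mkseq y m) - wval (mkseq y n)| @[m --> \oo] -->
                `|phi beta y - wval (mkseq y n)|.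
  exact: cvg_norm (cvgB wval_prefix_cvg (cvg_cst _)).
rewrite -(cvg_lim _ dist_cvg) //; apply: limr_le.
  by apply/cvg_ex; eexists; exact: dist_cvg.
near=> m; apply: wval_prefix_dist; near: m; exact: nbhs_infty_ge.
Unshelve. all: by end_near.
Qed.

Lemma phi_shift (c : nat -> int) k : (forall i, c (k + i)%N = y i) ->
  phi beta c = wval (mkseq c k) + beta ^- k * phi beta y.
Proof.
move=> cky.
have shift_cvg : wval (mkseq c (n + k)) @[n --> \oo] -->
                 wval (mkseq c k) + beta ^- k * phi beta y.
  have -> : (fun n => wval (mkseq c (n + k))) =
            (fun n => wval (mkseq c k) + beta ^- k * wval (mkseq y n)).
    apply: funext => n; rewrite addnC mkseqD wval_cat size_mkseq.
    by rewrite (eq_mkseq cky).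
  by apply: cvgD; [exact: cvg_cst | exact: cvgMl_tmp wval_prefix_cvg].
move: shift_cvg; rewrite (cvg_shiftn k (fun n => wval (mkseq c n))) => c_cvg.
rewrite -(cvg_lim _ c_cvg) //; congr (limn _).
by apply: funext => n; rewrite partial_sum_wval.
Qed.
End BoundedDigits.
End BetaExpansion.

Lemma ler_sum_drop (R : numDomainType) (T : eqType) (s : seq T) (b : T) (f g : T -> R) :
  b \in s -> f b <= 0 -> (forall t, f t <= g t) ->
  \sum_(t <- s) f t <= \sum_(t <- s) g t - g b.
Proof.
move=> + fb_le0 le_fg; elim: s => [|a s IH] //; rewrite in_cons !big_cons.
case: eqP => [<- _|_ /= bs].
  rewrite addrAC subrr add0r -[X in _ <= X]add0r; apply: lerD fb_le0 _.
  exact: ler_sum.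
by rewrite -addrA lerD // IH.
Qed.

Definition delta {R : pzSemiRingType} {V : eqType} (v : V) : V -> R :=
  fun i => (i == v)%:R.

Section LabelledWords.
Variables (R : realType) (V : finType) (E : rel V) (lab : V -> V -> int).

Definition alphabet : seq int := undup [seq lab p.1 p.2 | p <- enum {: V * V}].

Definition amax : R := \sum_(p : V * V) `|(lab p.1 p.2)%:~R : R|.

Lemma amax_ge0 : 0 <= amax.
Proof. exact: sumr_ge0. Qed.

Lemma lab_in_alphabet i j : lab i j \in alphabet.
Proof. by rewrite mem_undup; apply/mapP; exists (i, j); rewrite ?mem_enum. Qed.

Lemma lab_le_amax i j : `|(lab i j)%:~R : R| <= amax.
Proof. by rewrite /amax (bigD1 (i, j)) //= lerDl sumr_ge0. Qed.

Lemma alphabet_le_amax a : a \in alphabet -> `|a%:~R : R| <= amax.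
Proof. by rewrite mem_undup => /mapP [p _ ->]; exact: lab_le_amax. Qed.

Fixpoint words n : seq (seq int) :=
  if n is n'.+1 then [seq a :: w | a <- alphabet, w <- words n'] else [:: [::]].

Lemma mem_words n w : (w \in words n) = (size w == n) && all (mem alphabet) w.
Proof.
elim: n w => [|n IH] [|a w] //=.
  by apply/negP => /allpairsP [[b u] [_ _]].
apply/allpairsP/and3P => [[[b u] /= [bA uw [-> ->]]]|[sw aA aw]].
  by move: uw; rewrite IH => /andP [/eqP -> ->]; rewrite bA.
by exists (a, w); split => //=; rewrite IH -(eqn_add2r 1) !addn1 sw.
Qed.

Lemma size_words n w : w \in words n -> size w = n.
Proof. by rewrite mem_words => /andP [/eqP]. Qed.

Lemma words_le_amax n w : w \in words n -> forall a, a \in w -> `|a%:~R : R| <= amax.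
Proof. by rewrite mem_words => /andP [_ /allP H] a /H; exact: alphabet_le_amax. Qed.

Lemma big_words_add (f : seq int -> R) K n :
  \sum_(w <- words (K + n)) f w = \sum_(w1 <- words K) \sum_(w2 <- words n) f (w1 ++ w2).
Proof.
elim: K f => [|K IH] f; first by rewrite add0n big_seq1.
by rewrite addSn /= !big_allpairs_dep; apply: eq_bigr => a _; rewrite IH.
Qed.

Definition rowMword (r : V -> R) (w : seq int) : V -> R := foldl (rowMlab E lab) r w.

Lemma sum_mul_delta (r : V -> R) j : \sum_(v : V) r v * delta v j = r j.
Proof.
rewrite (bigD1 j) //= /delta eqxx mulr1 big1 ?addr0 // => v /negbTE.
by rewrite eq_sym => ->; rewrite mulr0.
Qed.

Lemma sum_delta_mul v (f : V -> R) : \sum_(j : V) delta v j * f j = f v.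
Proof.
rewrite (bigD1 v) //= /delta eqxx mul1r big1 ?addr0 // => j /negbTE ->.
by rewrite mul0r.
Qed.

Lemma rowMword_linear r w j : rowMword r w j = \sum_(v : V) r v * rowMword (delta v) w j.
Proof.
elim: w r j => [|a w IH] r j /=; first by rewrite sum_mul_delta.
rewrite /rowMword /= -/(rowMword _ w) IH.
under eq_bigr => v _ do rewrite -/(rowMword _ w) IH mulr_sumr.
rewrite exchange_big /=; apply: eq_bigr => u _.
rewrite /rowMlab mulr_suml; apply: eq_bigr => v _.
by rewrite mulrA sum_delta_mul.
Qed.

Lemma rowMword_scale c r w j : rowMword (fun i => c * r i) w j = c * rowMword r w j.
Proof.
rewrite rowMword_linear [in RHS]rowMword_linear mulr_sumr.
by apply: eq_bigr => v _; rewrite mulrA.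
Qed.

Lemma rowMword_ge0 r w : (forall i, 0 <= r i) -> forall j, 0 <= rowMword r w j.
Proof.
elim: w r => [|a w IH] r r_ge0 j //=.
apply: IH => i; apply: sumr_ge0 => k _.
by apply: mulr_ge0 (r_ge0 k) _; rewrite /Mlab ler0n.
Qed.

Lemma rowMword_path_ge (r : V -> R) (p : nat -> V) (y : nat -> int) :
  (forall k, E (p k) (p k.+1) /\ lab (p k) (p k.+1) = y k) -> (forall i, 0 <= r i) ->
  forall K, r (p 0%N) <= rowMword r (mkseq y K) (p K).
Proof.
move=> p_path r_ge0; elim=> [|K IH] //.
rewrite mkseqS /rowMword foldl_rcons -/(rowMword r _) /rowMlab (bigD1 (p K)) //=.
have [e l] := p_path K.
rewrite /Mlab e l eqxx mulr1; apply: (le_trans IH); rewrite lerDl.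
apply: sumr_ge0 => i _; apply: mulr_ge0; first exact: rowMword_ge0.
by rewrite /Mlab ler0n.
Qed.

Lemma word_weight_linear (r vR : V -> R) w :
  word_weight E lab r vR w = \sum_(v : V) r v * word_weight E lab (delta v) vR w.
Proof.
rewrite /word_weight; under eq_bigr => j _ do rewrite -/(rowMword _ _) rowMword_linear mulr_suml.
rewrite exchange_big /=; apply: eq_bigr => v _.
by rewrite mulr_sumr; apply: eq_bigr => j _; rewrite mulrA.
Qed.

Lemma word_weight_ge0 (r vR : V -> R) w : (forall i, 0 <= r i) -> (forall i, 0 <= vR i) ->
  0 <= word_weight E lab r vR w.
Proof.
move=> r_ge0 vR_ge0; apply: sumr_ge0 => j _.
exact: mulr_ge0 (rowMword_ge0 _ r_ge0 _) (vR_ge0 j).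
Qed.

Lemma sum_Mlab i j : \sum_(a <- alphabet) Mlab R E lab a i j = Madj R E i j.
Proof.
rewrite /Mlab /Madj; case: (E i j) => /=; last by rewrite big1.
rewrite (bigD1_seq (lab i j)) ?lab_in_alphabet ?undup_uniq //= eqxx big1 ?addr0 //.
by move=> a /negbTE; rewrite eq_sym => ->.
Qed.

Section RightEigenvector.
Variables (lam : R) (vR : V -> R).
Hypotheses (lam_gt0 : 0 < lam)
  (eigR : forall i, \sum_(j : V) Madj R E i j * vR j = lam * vR i).

Lemma sum_word_weight n r :
  \sum_(w <- words n) lam ^- n * word_weight E lab r vR w = \sum_(j : V) r j * vR j.
Proof.
elim: n r => [|n IH] r; first by rewrite big_seq1 expr0 invr1 mul1r.
rewrite /= big_allpairs_dep.
transitivity (\sum_(a <- alphabet) lam^-1 * \sum_(j : V) rowMlab E lab r a j * vR j).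
  apply: eq_bigr => a _; rewrite -IH mulr_sumr; apply: eq_bigr => w _.
  by rewrite exprS invfM mulrA.
have lam_neq0 : lam != 0 by rewrite gt_eqF.
rewrite -mulr_sumr; apply: (mulfI lam_neq0); rewrite mulrA mulfV // mul1r mulr_sumr.
under [RHS]eq_bigr => i _ do rewrite mulrCA -eigR mulr_sumr.
rewrite exchange_big [RHS]exchange_big /=; apply: eq_bigr => j _.
rewrite /rowMlab; under eq_bigr => a _ do rewrite mulr_suml.
rewrite exchange_big /=; apply: eq_bigr => i _.
by rewrite -sum_Mlab mulr_suml mulr_sumr; apply: eq_bigr => a _; ring.
Qed.

Lemma word_weight_le n w r : w \in words n -> (forall i, 0 <= r i) ->
  (forall i, 0 <= vR i) -> lam ^- n * word_weight E lab r vR w <= \sum_(j : V) r j * vR j.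
Proof.
move=> wn r_ge0 vR_ge0.
have := ler_sum_drop (f := fun _ => 0) (g := fun w => lam ^- n * word_weight E lab r vR w)
  wn (lexx 0).
rewrite sum_word_weight big1 // subr_ge0; apply=> u.
by rewrite mulr_ge0 ?word_weight_ge0 // invr_ge0 exprn_ge0 // ltW.
Qed.

End RightEigenvector.
End LabelledWords.

Lemma exists_uniform_index (T : finType) (P : T -> nat -> Prop) :
  (forall t m n, (m <= n)%N -> P t m -> P t n) -> (forall t, exists n, P t n) ->
  exists n, forall t, P t n.
Proof.
move=> P_mono /choice [N PN]; exists (\max_t N t) => t.
exact: P_mono (leq_bigmax t) (PN t).
Qed.

Lemma exists_forall_antitone (T : finType) (P : T -> nat -> Prop) :
  (forall t m n, (m <= n)%N -> P t n -> P t m) -> (forall n, exists t, P t n) ->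
  exists t, forall n, P t n.
Proof.
move=> P_anti P_ex; apply/not_existsP => nP.
have [N NP] : exists N, forall t, ~ P t N.
  apply: exists_uniform_index => [t m n mn nPm Pn|t]; first exact: nPm (P_anti _ _ _ mn Pn).
  by apply/existsNP; exact: nP.
by have [t Pt] := P_ex N; exact: NP t Pt.
Qed.

Lemma mkseq_prefix_eq (T : Type) (y y' : nat -> T) k :
  (forall i, (i < k)%N -> y i = y' i) -> mkseq y k = mkseq y' k.
Proof. by move=> H; apply/eq_in_map => i; rewrite mem_iota add0n => /andP [_ /H]. Qed.

Section KoenigLemma.
Variables (V : finType) (E : rel V) (lab : V -> V -> int) (y : nat -> int).

Definition reads m n (q : nat -> V) :=
  forall i, (i < n)%N -> E (q i) (q i.+1) /\ lab (q i) (q i.+1) = y (m + i)%N.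

Definition extendable m v := forall n, exists2 q, q 0%N = v & reads m n q.

Lemma reads_prefix m n n' q : (n' <= n)%N -> reads m n q -> reads m n' q.
Proof. by move=> n'n r i i_lt; apply: r; exact: leq_trans i_lt n'n. Qed.

Lemma extendable_start : (forall n, exists q, reads 0 n q) -> exists v, extendable 0 v.
Proof.
move=> H; apply: exists_forall_antitone.
  by move=> v n n' n'n [q q0 r]; exists q => //; exact: reads_prefix r.
by move=> n; have [q r] := H n; exists (q 0%N), q.
Qed.

Lemma extendable_step m v : extendable m v ->
  exists v', [/\ E v v', lab v v' = y m & extendable m.+1 v'].
Proof.
move=> ext.
have [v' Hv'] : exists v', forall n,
    [/\ E v v', lab v v' = y m & exists2 q, q 0%N = v' & reads m.+1 n q].
  apply: exists_forall_antitone.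
    move=> v' n n' n'n [e l [q q0 r]]; split => //.
    by exists q => //; exact: reads_prefix r.
  move=> n; have [q q0 r] := ext n.+1; have [e l] := r 0%N isT.
  rewrite q0 addn0 in e l; exists (q 1%N); split => //.
  by exists (fun i => q i.+1) => // i i_lt; rewrite addSnnS; exact: r.
exists v'; have [e l _] := Hv' 0%N; split => // n.
by have [_ _ ?] := Hv' n.
Qed.

Lemma Kplus_of_reads : (forall n, exists q, reads 0 n q) -> Kplus E lab y.
Proof.
move=> H; have [v0 ext0] := extendable_start H.
have next_ex (vm : V * nat) : exists v', extendable vm.2 vm.1 ->
    [/\ E vm.1 v', lab vm.1 v' = y vm.2 & extendable vm.2.+1 v'].
  have [ext|] := pselect (extendable vm.2 vm.1); last by exists vm.1.
  by have [v' Hv'] := extendable_step ext; exists v'.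
have [next Hnext] := choice next_ex.
pose p := fix p m := if m is m'.+1 then next (p m', m') else v0.
have ext_p m : extendable m (p m).
  by elim: m => [|m IH] //=; have [_ _ ?] := Hnext (p m, m) IH.
by exists p => k /=; have [e l _] := Hnext (p k, k) (ext_p k).
Qed.

End KoenigLemma.

Section PathLabels.
Variables (R : realType) (V : finType) (E : rel V) (lab : V -> V -> int) (beta : R).
Hypothesis beta_gt1 : 1 < beta.

Definition labels_from v (y : nat -> int) := exists p : nat -> V,
  p 0%N = v /\ forall k, E (p k) (p k.+1) /\ lab (p k) (p k.+1) = y k.

Definition tail_bound : R := amax R lab / (beta - 1).

Lemma tail_bound_ge0 : 0 <= tail_bound.
Proof. by rewrite divr_ge0 ?amax_ge0 // subr_ge0 ltW. Qed.

Lemma Kplus_labels_from y : Kplus E lab y -> exists v, labels_from v y.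
Proof. by move=> [p Hp]; exists (p 0%N), p. Qed.

Lemma labels_from_le_amax v y : labels_from v y -> forall i, `|(y i)%:~R : R| <= amax R lab.
Proof. by move=> [p [_ H]] i; have [_ <-] := H i; exact: lab_le_amax. Qed.

Lemma labels_from_prefix_words v y n : labels_from v y -> mkseq y n \in words lab n.
Proof.
move=> [p [_ H]]; rewrite mem_words size_mkseq eqxx /=.
by apply/allP => a /mapP [i _ ->]; have [_ <-] := H i; exact: lab_in_alphabet.
Qed.

Lemma labels_from_phi_prefix_dist v y n : labels_from v y ->
  `|phi beta y - wval beta (mkseq y n)| <= tail_bound * beta ^- n.
Proof.
move=> Ly; apply: phi_prefix_dist => //; first exact: amax_ge0.
exact: labels_from_le_amax Ly.
Qed.

Lemma phi_prefix_close v w y y' k : labels_from v y -> labels_from w y' ->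
  (forall i, (i < k)%N -> y i = y' i) ->
  `|phi beta y - phi beta y'| <= 2 * tail_bound * beta ^- k.
Proof.
move=> Ly Ly' yy'.
have := labels_from_phi_prefix_dist k Ly; have := labels_from_phi_prefix_dist k Ly'.
rewrite (mkseq_prefix_eq yy') => d' d.
have := ler_distD (wval beta (mkseq y' k)) (phi beta y) (phi beta y').
by rewrite [`|wval _ _ - _|]distrC; lra.
Qed.

Lemma labels_from_escape v y z K : labels_from v y ->
  3 * tail_bound * beta ^- K < `|z - phi beta y| ->
  2 * tail_bound < `|beta ^+ K * (z - wval beta (mkseq y K))|.
Proof.
move=> Ly y_far; have := labels_from_phi_prefix_dist K Ly.
have bK_gt0 : 0 < beta ^+ K by rewrite exprn_gt0 // beta_gt0.
rewrite normrM (gtr0_norm bK_gt0) -(ltr_pM2l (exprVn_gt0 beta_gt1 K)).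
rewrite mulrA mulVf ?gt_eqF // mul1r => prefix_close.
have := ler_distD (wval beta (mkseq y K)) z (phi beta y).
by rewrite [`|wval _ _ - _|]distrC; lra.
Qed.

Lemma Mpow_gt0_path k i j : 0 < Mpow R E k i j ->
  exists q : nat -> V, [/\ q 0%N = i, q k = j & forall t, (t < k)%N -> E (q t) (q t.+1)].
Proof.
elim: k j => [|k IH] j /=.
  by case: eqP => [-> _|_]; [exists (fun _ => j) | rewrite ltxx].
move=> Mpow_gt0.
have [l Ml] : exists l, 0 < Mpow R E k i l * Madj R E l j.
  apply/not_existsP => none; move: Mpow_gt0; apply/negP; rewrite -leNgt.
  by apply: sumr_le0 => l _; rewrite leNgt; apply/negP; exact: none.
have Elj : E l j by move: Ml; rewrite /Madj; case: (E l j) => //; rewrite mulr0 ltxx.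
have [q [q0 qk Hq]] : exists q : nat -> V, [/\ q 0%N = i, q k = l &
    forall t, (t < k)%N -> E (q t) (q t.+1)].
  by apply: IH; move: Ml; rewrite /Madj Elj mulr1.
exists (fun t => if (t <= k)%N then q t else j); split; rewrite ?ltnn //.
move=> t; rewrite ltnS => tk; rewrite tk; case: ltnP => [|kt]; first exact: Hq.
suff -> : t = k by rewrite qk.
by apply/eqP; rewrite eqn_leq tk kt.
Qed.

Definition phi_const_from v :=
  forall y y', labels_from v y -> labels_from v y' -> phi beta y = phi beta y'.

Section Prepend.
Variables (q : nat -> V) (k : nat).
Hypothesis q_path : forall t, (t < k)%N -> E (q t) (q t.+1).

Definition prepend (y : nat -> int) i := if (i < k)%N then lab (q i) (q i.+1) else y (i - k)%N.

Lemma labels_from_prepend y : labels_from (q k) y -> labels_from (q 0%N) (prepend y).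
Proof.
move=> [p [p0 Hp]].
exists (fun i => if (i <= k)%N then q i else p (i - k)%N); split => // i.
rewrite /prepend; case: (ltnP i k) => [ik|ki].
  by rewrite (ltnW ik); split => //; exact: q_path.
rewrite subSn //; case: leqP => [ik|_]; last exact: Hp.
have -> : i = k by apply/eqP; rewrite eqn_leq ik ki.
by rewrite subnn -p0; exact: Hp.
Qed.

Lemma phi_const_from_path : phi_const_from (q 0%N) -> phi_const_from (q k).
Proof.
move=> const0 y y' Ly Ly'.
have phi_prepend y0 : labels_from (q k) y0 ->
    phi beta (prepend y0) = wval beta (mkseq (prepend y0) k) + beta ^- k * phi beta y0.
  move=> Ly0; apply: (phi_shift beta_gt1 (amax_ge0 R lab) (labels_from_le_amax Ly0)).
  by move=> i; rewrite /prepend ltnNge leq_addr addKn.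
have same_prefix : mkseq (prepend y) k = mkseq (prepend y') k.
  by apply: mkseq_prefix_eq => i ik; rewrite /prepend ik.
have := const0 _ _ (labels_from_prepend Ly) (labels_from_prepend Ly').
rewrite (phi_prepend y Ly) (phi_prepend y' Ly') same_prefix => /addrI /mulfI; apply.
by rewrite gt_eqF // (exprVn_gt0 beta_gt1).
Qed.
End Prepend.

Lemma phi_const_locally : (forall v, phi_const_from v) ->
  exists k, forall u w y y', labels_from u y -> labels_from w y' ->
    (forall i, (i < k)%N -> y i = y' i) -> phi beta y = phi beta y'.
Proof.
move=> const.
pose P (uw : V * V) k := forall y y', labels_from uw.1 y -> labels_from uw.2 y' ->
  (forall i, (i < k)%N -> y i = y' i) -> phi beta y = phi beta y'.
have [k Hk] : exists k, forall uw, P uw k.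
  apply: exists_uniform_index => [uw m n mn H y y' Ly Ly' yy'|[u w]].
    by apply: H Ly Ly' _ => i im; apply: yy'; exact: leq_trans im mn.
  have [[y0 [y0' [L0 L0' ne]]]|] := pselect (exists y0 y0',
      [/\ labels_from u y0, labels_from w y0' & phi beta y0 != phi beta y0']); last first.
    move=> none; exists 0%N => y y' Ly Ly' _.
    by case: (eqVneq (phi beta y) (phi beta y')) => // ne; exfalso; apply: none; exists y, y'.
  have d_gt0 : 0 < `|phi beta y0 - phi beta y0'| by rewrite normr_gt0 subr_eq0.
  have [k Hk] := exprVn_lt beta_gt1 (2 * tail_bound) d_gt0.
  exists k => y y' Ly Ly' yy'; exfalso; have := phi_prefix_close Ly Ly' yy'.
  by rewrite (const _ _ _ Ly L0) (const _ _ _ Ly' L0') leNgt Hk.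
by exists k => u w y y' Ly Ly'; exact: (Hk (u, w)).
Qed.

Definition fiber (x : R) := [set s | Kplus E lab s /\ phi beta s = x].

Lemma fiber_open_of_const x : (forall v, phi_const_from v) ->
  open_in_K (Kplus E lab) (fiber x).
Proof.
move=> /phi_const_locally [k Hk]; split=> [s []//|y [Ky <-]].
exists k => y' Ky' y'y; split => //.
have [u Lu] := Kplus_labels_from Ky'; have [w Lw] := Kplus_labels_from Ky.
exact: Hk Lu Lw y'y.
Qed.

Lemma nonconst_everywhere w : primitive_mx R E -> ~ phi_const_from w ->
  forall v, ~ phi_const_from v.
Proof.
move=> [k Mk] ncw v cv; have [q [q0 qk q_path]] := Mpow_gt0_path (Mk v w).
by apply: ncw; rewrite -qk; apply: phi_const_from_path q_path _; rewrite q0.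
Qed.

Lemma far_labels_from : (forall v, ~ phi_const_from v) ->
  exists K, forall v z, exists2 y, labels_from v y & 3 * tail_bound * beta ^- K < `|z - phi beta y|.
Proof.
move=> nc; apply: exists_uniform_index => [v m n mn H z|v].
  have [y Ly Hy] := H z; exists y => //; apply: le_lt_trans Hy.
  by rewrite ler_wpM2l ?(exprVn_le beta_gt1) // mulr_ge0 // tail_bound_ge0.
have [y [y' [Ly Ly' ne]]] : exists y y',
    [/\ labels_from v y, labels_from v y' & phi beta y != phi beta y'].
  apply: contra_notP (nc v) => none y y' Ly Ly'.
  by case: (eqVneq (phi beta y) (phi beta y')) => // ne; exfalso; apply: none; exists y, y'.
have d_gt0 : 0 < `|phi beta y - phi beta y'| / 2 by rewrite divr_gt0 // normr_gt0 subr_eq0.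
have [K HK] := exprVn_lt beta_gt1 (3 * tail_bound) d_gt0; exists K => z.
have [near_y|] := lerP `|z - phi beta y| (3 * tail_bound * beta ^- K); last by exists y.
exists y' => //; have := ler_distD z (phi beta y) (phi beta y').
by rewrite [`|phi beta y - z|]distrC; lra.
Qed.

End PathLabels.

Section NearMass.
Variables (R : realType) (V : finType) (E : rel V) (lab : V -> V -> int)
  (beta lam : R) (vR : V -> R).
Hypotheses (beta_gt1 : 1 < beta) (lam_gt0 : 0 < lam) (vR_gt0 : forall i, 0 < vR i)
  (eigR : forall i, \sum_(j : V) Madj R E i j * vR j = lam * vR i).

Local Notation C := (tail_bound lab beta).
Local Notation ww r w := (word_weight E lab r vR w).

Let vR_ge0 i : 0 <= vR i := ltW (vR_gt0 i).

Let lamVn_gt0 n : 0 < lam ^- n.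
Proof. by rewrite invr_gt0 exprn_gt0. Qed.

(* The [lam ^- n]-normalised mass, seen from the row vector [r], of the level-[n]
   cylinders that may still contain a point of [phi^-1 z]. *)
Definition near_mass (r : V -> R) (z : R) n :=
  \sum_(w <- words lab n | `|z - wval beta w| <= C * beta ^- n) lam ^- n * ww r w.

Lemma near_mass_cat r z K n : near_mass r z (K + n) =
  \sum_(u <- words lab K)
    near_mass (fun i => lam ^- K * rowMword E lab r u i) (beta ^+ K * (z - wval beta u)) n.
Proof.
rewrite /near_mass big_mkcond big_words_add big_seq [RHS]big_seq.
apply: eq_bigr => u uK; rewrite [RHS]big_mkcond; apply: eq_bigr => w _.
have bK_neq0 : beta ^+ K != 0 by rewrite gt_eqF // exprn_gt0 // beta_gt0.
have -> : z - wval beta (u ++ w) = beta ^- K * (beta ^+ K * (z - wval beta u) - wval beta w).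
  by rewrite wval_cat (size_words uK); field.
rewrite normrM ger0_norm ?(ltW (exprVn_gt0 beta_gt1 _)) // exprD invfM mulrCA.
rewrite ler_pM2l ?(exprVn_gt0 beta_gt1) //; case: ifP => // _.
rewrite /word_weight !mulr_sumr; apply: eq_bigr => j _.
have := rowMword_scale E lab (lam ^- K) (rowMword E lab r u) w j.
by rewrite /rowMword foldl_cat => ->; rewrite exprD invfM; ring.
Qed.

Lemma near_mass_linear r z n : near_mass r z n = \sum_(v : V) r v * near_mass (delta v) z n.
Proof.
rewrite /near_mass; under eq_bigr => w _ do rewrite word_weight_linear mulr_sumr.
rewrite exchange_big /=; apply: eq_bigr => v _.
by rewrite mulr_sumr; apply: eq_bigr => w _; ring.
Qed.

Lemma near_mass_le r z n : (forall i, 0 <= r i) -> near_mass r z n <= \sum_(j : V) r j * vR j.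
Proof.
move=> r_ge0; rewrite -(sum_word_weight lab lam_gt0 eigR n r) /near_mass big_mkcond /=.
apply: ler_sum => w _; case: ifP => // _.
by rewrite mulr_ge0 ?word_weight_ge0 ?(ltW (lamVn_gt0 _)) //; exact: vR_ge0.
Qed.

Lemma near_mass_far r z n : 2 * C < `|z| -> near_mass r z n = 0.
Proof.
move=> z_far; rewrite /near_mass big_seq_cond big1 // => w /andP [wn w_near]; exfalso.
have w_le : `|wval beta w| <= C.
  by apply: wval_bound => //; [exact: amax_ge0 | exact: words_le_amax wn].
have tail_le : C * beta ^- n <= C.
  rewrite -[leRHS]mulr1 ler_wpM2l ?tail_bound_ge0 //.
  by have := exprVn_le beta_gt1 (leq0n n); rewrite expr0 invr1.
have := ler_normD (z - wval beta w) (wval beta w); rewrite subrK; lra.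
Qed.

Definition escaping K eta := forall v z, exists2 u, u \in words lab K &
  eta * vR v <= lam ^- K * ww (delta v) u /\ 2 * C < `|beta ^+ K * (z - wval beta u)|.

Lemma near_mass_decay K eta : 0 <= eta <= 1 -> escaping K eta ->
  forall j r z, (forall i, 0 <= r i) ->
  near_mass r z (j * K) <= (1 - eta) ^+ j * \sum_(i : V) r i * vR i.
Proof.
move=> /andP [eta_ge0 eta_le1] esc; elim=> [|j IH] r z r_ge0.
  by rewrite mul0n expr0 mul1r; exact: near_mass_le.
have decay_ge0 : 0 <= (1 - eta) ^+ j by rewrite exprn_ge0 // subr_ge0.
rewrite mulSn near_mass_linear mulr_sumr; apply: ler_sum => v _.
rewrite mulrCA ler_wpM2l //; have [u uK [u_heavy u_far]] := esc v z.
rewrite near_mass_cat.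
pose g w := (1 - eta) ^+ j * (lam ^- K * ww (delta v) w).
apply: le_trans (ler_sum_drop (g := g) uK _ _) _.
- by rewrite near_mass_far.
- move=> w; apply: le_trans (IH _ _ _) _.
    move=> i; rewrite mulr_ge0 ?(ltW (lamVn_gt0 _)) //.
    by apply: rowMword_ge0 => k; rewrite /delta ler0n.
  rewrite /g /word_weight ler_wpM2l // mulr_sumr.
  by apply: ler_sum => i _; rewrite mulrA.
rewrite /g -mulr_sumr (sum_word_weight lab lam_gt0 eigR) sum_delta_mul exprSr -mulrA.
rewrite -mulrBr ler_wpM2l //; lra.
Qed.

Lemma word_weight_prefix_ge v y K : labels_from E lab v y ->
  exists j, vR j <= ww (delta v) (mkseq y K).
Proof.
move=> [p [p0 p_path]]; exists (p K).
have delta_ge0 i : 0 <= delta v i :> R by rewrite /delta ler0n.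
have := rowMword_path_ge p_path delta_ge0 K; rewrite p0 /delta eqxx => one_le.
rewrite /word_weight (bigD1 (p K)) //=; apply: ler_wpDr.
  by apply: sumr_ge0 => i _; rewrite mulr_ge0 ?vR_ge0 ?rowMword_ge0.
by rewrite -[leLHS]mul1r ler_wpM2r ?vR_ge0.
Qed.

Lemma escaping_of_far K (v0 : V) :
  (forall v z, exists2 y, labels_from E lab v y & 3 * C * beta ^- K < `|z - phi beta y|) ->
  exists eta, 0 < eta <= 1 /\ escaping K eta.
Proof.
move=> far; pose S := \sum_v vR v.
have vR_le_S v : vR v <= S by rewrite /S (bigD1 v) //= lerDl sumr_ge0 // => i _; exact: vR_ge0.
have S_gt0 : 0 < S := lt_le_trans (vR_gt0 v0) (vR_le_S v0).
pose m := (\sum_v (vR v)^-1)^-1.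
have inv_sum_gt0 : 0 < \sum_v (vR v)^-1.
  by rewrite (bigD1 v0) //= ltr_pwDl ?invr_gt0 // sumr_ge0 // => i _; rewrite invr_ge0 vR_ge0.
have m_gt0 : 0 < m by rewrite invr_gt0.
have m_le v : m <= vR v.
  rewrite -[vR v]invrK lef_pV2 ?posrE ?invr_gt0 //.
  by rewrite (bigD1 v) //= lerDl sumr_ge0 // => i _; rewrite invr_ge0 vR_ge0.
have heavy v y : labels_from E lab v y -> lam ^- K * m <= lam ^- K * ww (delta v) (mkseq y K).
  move=> /(word_weight_prefix_ge K) [j j_le].
  by rewrite ler_pM2l ?lamVn_gt0 //; exact: le_trans (m_le j) j_le.
exists (lam ^- K * m / S); split.
  rewrite divr_gt0 ?mulr_gt0 ?lamVn_gt0 //= ler_pdivrMr // mul1r.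
  have [y Ly _] := far v0 0; apply: le_trans (heavy _ _ Ly) (le_trans _ (vR_le_S v0)).
  have := word_weight_le lam_gt0 eigR (labels_from_prefix_words K Ly) (r := delta v0).
  by rewrite sum_delta_mul; apply=> i; rewrite ?vR_ge0 // /delta ler0n.
move=> v z; have [y Ly y_far] := far v z.
exists (mkseq y K); first exact: labels_from_prefix_words Ly.
split; last exact: labels_from_escape Ly y_far.
apply: le_trans (heavy _ _ Ly); rewrite mulrAC ler_pdivrMr // ler_pM2l ?mulr_gt0 ?lamVn_gt0 //.
Qed.

End NearMass.

Lemma le_geometric_le0 (R : realType) (a : \bar R) (q : R) :
  0 <= q < 1 -> (forall j, a <= (q ^+ j)%:E)%E -> (a <= 0)%E.
Proof.
move=> q01; case: a => [e| |] // a_le; last by have := a_le 0%N; rewrite leNgt ltey.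
rewrite lee_fin leNgt; apply/negP => e_gt0.
have [j Hj] := @geometric_lt R q 1 e q01 e_gt0.
by have := a_le j; rewrite lee_fin leNgt -[q ^+ j]mul1r Hj.
Qed.

Lemma cyl_measurable (w : seq int) : measurable (cyl w : set SeqSpace).
Proof. by apply: sub_sigma_algebra; exists w. Qed.

Lemma bigsetU_cyl_measurable (s : seq (seq int)) (P : pred (seq int)) :
  measurable (\big[setU/set0]_(w <- s | P w) cyl w : set SeqSpace).
Proof. by apply: bigsetU_measurable => w _; exact: cyl_measurable. Qed.

Lemma measure_bigsetU_cyl_le (R : realType) (mu : {measure set SeqSpace -> \bar R})
    (f : seq int -> R) (s : seq (seq int)) (P : pred (seq int)) :
  (forall w, mu (cyl w) = (f w)%:E) ->
  (mu (\big[setU/set0]_(w <- s | P w) cyl w) <= (\sum_(w <- s | P w) f w)%:E)%E.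
Proof.
move=> mu_cyl; elim: s => [|a s IH]; first by rewrite !big_nil measure0.
rewrite !big_cons; case: (P a) => //.
apply: le_trans (measureU2 _ (cyl_measurable a) (bigsetU_cyl_measurable _ _)) _.
by rewrite EFinD -mu_cyl leeD2l.
Qed.

Section Fiber.
Variables (R : realType) (V : finType) (E : rel V) (lab : V -> V -> int) (beta : R).
Hypothesis beta_gt1 : 1 < beta.

Local Notation C := (tail_bound lab beta).

Definition path_cylinders n := \big[setU/set0]_(u <- words lab n |
  `[< exists q, reads E lab (nth 0 u) 0 n q >]) cyl u.

Definition near_cylinders x n :=
  \big[setU/set0]_(u <- words lab n | `|x - wval beta u| <= C * beta ^- n) cyl u.

Lemma cyl_mkseq (y : nat -> int) n : cyl (mkseq y n) y.
Proof. by move=> i; rewrite size_mkseq => i_lt; rewrite nth_mkseq. Qed.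

Lemma cyl_words_mkseq y n u : u \in words lab n -> cyl u y -> mkseq y n = u.
Proof.
move=> un yu; rewrite -[u](mkseq_nth 0) (size_words un).
by apply: mkseq_prefix_eq => i i_lt; apply: yu; rewrite (size_words un).
Qed.

Lemma Kplus_eq_bigcap : Kplus E lab = \bigcap_n path_cylinders n.
Proof.
apply/seteqP; split => y.
  move=> Ky n _; have [v Lv] := Kplus_labels_from Ky.
  rewrite /path_cylinders -bigcup_seq_cond; exists (mkseq y n); last exact: cyl_mkseq.
  rewrite /= (labels_from_prefix_words n Lv) /=; apply/asboolP.
  case: Ky => p Hp; exists p => i i_lt; rewrite add0n nth_mkseq //; exact: Hp.
move=> Hy; apply: Kplus_of_reads => n.
have := Hy n I; rewrite /path_cylinders -bigcup_seq_cond => -[u /andP [un /asboolP [q Hq]] yu].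
by exists q => i i_lt; have := Hq i i_lt; rewrite add0n -(cyl_words_mkseq un yu) nth_mkseq.
Qed.

Lemma fiber_eq x : fiber E lab beta x = Kplus E lab `&` \bigcap_n near_cylinders x n.
Proof.
apply/seteqP; split => y.
  move=> [Ky <-]; split => // n _; have [v Lv] := Kplus_labels_from Ky.
  rewrite /near_cylinders -bigcup_seq_cond; exists (mkseq y n); last exact: cyl_mkseq.
  by rewrite /= (labels_from_prefix_words n Lv) /= (labels_from_phi_prefix_dist beta_gt1 n Lv).
move=> [Ky Hy]; split => //; have [v Lv] := Kplus_labels_from Ky.
apply: subr0_eq; apply: (@le_exprVn_eq0 _ _ beta_gt1 _ (2 * C)) => n.
have := Hy n I; rewrite /near_cylinders -bigcup_seq_cond => -[u /andP [un u_near] yu].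
have := labels_from_phi_prefix_dist beta_gt1 n Lv; rewrite (cyl_words_mkseq un yu) => y_near.
have := ler_distD (wval beta u) (phi beta y) x.
by rewrite [`|wval _ _ - _|]distrC; lra.
Qed.

Lemma fiber_measurable x : measurable (fiber E lab beta x : set SeqSpace).
Proof.
rewrite fiber_eq Kplus_eq_bigcap.
by apply: measurableI; apply: bigcapT_measurable => n; exact: bigsetU_cyl_measurable.
Qed.

Lemma measure_fiber_le (mu : {measure set SeqSpace -> \bar R}) lam (vL vR : V -> R) x n :
  (forall w, mu (cyl w) = (lam ^- size w * word_weight E lab vL vR w)%:E) ->
  (mu (fiber E lab beta x) <= (near_mass E lab beta lam vR vL x n)%:E)%E.
Proof.
move=> mu_cyl; apply: (@le_trans _ _ (mu (near_cylinders x n))).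
  apply: le_measure; rewrite ?inE; [exact: fiber_measurable | exact: bigsetU_cyl_measurable |].
  by rewrite fiber_eq => y [_ /(_ n I)].
apply: le_trans (measure_bigsetU_cyl_le _ _ mu_cyl) _.
rewrite lee_fin /near_mass big_seq_cond [leRHS]big_seq_cond.
rewrite (eq_bigr (fun u => lam ^- n * word_weight E lab vL vR u)) // => u /andP [un _].
by rewrite (size_words un).
Qed.

End Fiber.

Theorem lemma5 (R : realType) (V : finType) (E : rel V) (lab : V -> V -> int)
  (beta : R) (lam : R) (vL vR : V -> R)
  (mu : probability SeqSpace R) (x : R) :
  primitive_mx R E ->
  is_pisot beta ->
  0 < lam ->
  (forall i, 0 < vL i) -> (forall i, 0 < vR i) ->
  (forall j, \sum_(i : V) vL i * Madj R E i j = lam * vL j) ->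
  (forall i, \sum_(j : V) Madj R E i j * vR j = lam * vR i) ->
  \sum_(i : V) vL i * vR i = 1 ->
  (forall w : seq int,
     mu (cyl w) = (lam ^- size w * word_weight E lab vL vR w)%:E) ->
  (0 < mu [set s | Kplus E lab s /\ phi beta s = x])%E ->
  open_in_K (Kplus E lab) [set s | Kplus E lab s /\ phi beta s = x].
Proof.
move=> prim [beta_gt1 _] lam_gt0 vL_gt0 vR_gt0 _ eigR vLvR mu_cyl fiber_gt0.
have [const|] := pselect (forall v, phi_const_from E lab beta v).
  exact: fiber_open_of_const.
move=> /existsNP [w /(nonconst_everywhere beta_gt1 prim) nonconst].
have [K far] := far_labels_from beta_gt1 nonconst.
have [eta [/andP [eta_gt0 eta_le1] esc]] :=
  escaping_of_far beta_gt1 lam_gt0 vR_gt0 eigR w far.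
have decay j : (mu (fiber E lab beta x) <= ((1 - eta) ^+ j)%:E)%E.
  apply: le_trans (measure_fiber_le beta_gt1 x (j * K) mu_cyl) _; rewrite lee_fin.
  have eta01 : 0 <= eta <= 1 by rewrite ltW.
  have := near_mass_decay beta_gt1 lam_gt0 vR_gt0 eigR eta01 esc j x (fun i => ltW (vL_gt0 i)).
  by rewrite vLvR mulr1.
have q01 : 0 <= 1 - eta < 1 by rewrite subr_ge0 eta_le1 ltrBlDr ltrDl.
by have := le_geometric_le0 q01 decay; rewrite leNgt fiber_gt0.
Qed.
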